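(* For every positive integer $n$, \[ \sum_{k=1}^{n}(8k-1)\frac{(1)_k(-\tfrac{1}{4})_k(-\tfrac{3}{4})_k}{(\tfrac{1}{2})_k^2(\tfrac{3}{2})_k}\frac{(\tfrac{1}{2}+n)_k(-n)_k}{(\tfrac{1}{2}+3n)_k(-1-3n)_k}\sum_{i=1}^{k}\left\{\frac{1}{(2i-1)^2}-\frac{9}{4i^2}\right\} =\frac{n!^2(\tfrac{1}{6})_n(\tfrac{5}{6})_n}{(\tfrac{1}{2})_n^2(\tfrac{2}{3})_n(\tfrac{4}{3})_n}\sum_{j=1}^{2n}\frac{(-1)^{j}}{j^2}. \]
   Context: For a complex number $x$ and a nonnegative integer $n$, $(x)_n=x(x+1)\cdots(x+n-1)$ denotes the shifted factorial (Pochhammer symbol), with $(x)_0=1$. *)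

From mathcomp Require Import all_boot all_order all_algebra.
Set Implicit Arguments. Unset Strict Implicit. Unset Printing Implicit Defensive.
Import Order.TTheory GRing.Theory Num.Theory.
Local Open Scope ring_scope.

Definition poch (x : rat) (n : nat) : rat := \prod_(i < n) (x + i%:R).

From mathcomp Require Import all_boot all_order all_algebra.
From mathcomp Require Import ring lra zify.
Import Order.TTheory GRing.Theory Num.Theory.
Local Open Scope ring_scope.

(* The summand t(n,k) of the left side is hypergeometric in both n and k, and
   the factor C(n) of the right side satisfies C(n+1) = rho(n) C(n).  Creative
   telescoping gives a rational certificate R with
     t(n+1,k) - rho(n) t(n,k) = G(n,k+1) - G(n,k),   G(n,k) = R(n,k) t(n+1,k).
   Summing by parts against the partial sums H(k) = h(1) + ... + h(k) of the
   inner sum turns this into L(n+1) - rho(n) L(n) = -Y(n), where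
   Y(n) = sum_k G(n,k) h(k).  A second certificate Q shows Y(n+1) = sigma(n) Y(n),
   whence Y(n) = C(n+1) (1/(2n+1)^2 - 1/(2n+2)^2).  This is exactly the drop of
   the alternating sum from 2n to 2n+2 terms, so L(n) = C(n) sum_(j<=2n) (-1)^j/j^2
   follows by induction on n. *)

Lemma poch0 x : poch x 0 = 1.
Proof. by rewrite /poch big_ord0. Qed.

Lemma pochS x k : poch x k.+1 = poch x k * (x + k%:R).
Proof. by rewrite /poch big_ord_recr. Qed.

Lemma pochD x m k : poch x (m + k) = poch x m * poch (x + m%:R) k.
Proof.
elim: k => [|k IHk]; first by rewrite addn0 poch0 mulr1.
by rewrite addnS !pochS IHk natrD addrA mulrA.
Qed.

Lemma poch_shift x y k : y = x + 1 -> poch x k * (x + k%:R) = x * poch y k.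
Proof. by move=> ->; rewrite -pochS -add1n pochD pochS poch0 mul1r addr0. Qed.

Lemma poch_shift3 x y k : y = x + 3 ->
  poch x k * ((x + k%:R) * (x + 1 + k%:R) * (x + 2 + k%:R))
  = x * (x + 1) * (x + 2) * poch y k.
Proof.
move=> ->; transitivity (poch x (3 + k)).
  by rewrite addnC addn3 !pochS -!natr1; ring.
by rewrite pochD !pochS poch0; ring.
Qed.

Lemma poch_gt0 x k : 0 < x -> 0 < poch x k.
Proof. by move=> x_gt0; apply: prodr_gt0 => i _; rewrite ltr_wpDr. Qed.

Lemma poch_Nnat_eq0 m k : (poch (- m%:R) k == 0) = (m < k)%N.
Proof.
rewrite /poch prodf_seq_eq0; apply/hasP/idP => [[i _ /=]|lt_mk].
  by rewrite addrC subr_eq0 eqr_nat => /eqP <-.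
by exists (Ordinal lt_mk); rewrite ?mem_index_enum //= addNr eqxx.
Qed.

Lemma sumr_by_parts (R : pzRingType) (g h : nat -> R) N :
  \sum_(1 <= k < N.+1) (g k.+1 - g k) * \sum_(1 <= i < k.+1) h i
  = g N.+1 * \sum_(1 <= i < N.+1) h i - \sum_(1 <= k < N.+1) g k * h k.
Proof.
elim: N => [|N IHN]; first by rewrite !big_geq // mulr0 subrr.
rewrite !(big_nat_recr _ _ _ (ltn0Sn N)) /= IHN !mulrDr !mulrBl.
by rewrite addrCA addrA (addrA (_ - _)) subrK opprD addrACA.
Qed.

Lemma poch_N3n1_neq0 n k : (k <= 3 * n + 1)%N -> poch (-1 - 3 * n%:R) k != 0.
Proof.
rewrite (_ : -1 - 3 * n%:R = - (3 * n + 1)%:R); last by rewrite natrD natrM; ring.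
by rewrite poch_Nnat_eq0 -leqNgt.
Qed.

Lemma natr8_sub1_neq0 k : 8 * k%:R - 1 != 0 :> rat.
Proof. by rewrite subr_eq0 -natrM pnatr_eq1; lia. Qed.

Ltac neq0_factor := match goal with
  | |- is_true (_ * _ != 0) => apply: mulf_neq0; neq0_factor
  | |- is_true (_ ^+ _ != 0) => apply: expf_neq0; neq0_factor
  | H : is_true (?p != 0) |- is_true (?p != 0) => exact: H
  | H : is_true (0 < ?p) |- is_true (?p != 0) => exact: lt0r_neq0 H
  | _ => lra
  end.
Ltac neq0 := repeat (apply/andP; split); neq0_factor.

Definition term (n k : nat) : rat :=
  (8 * k%:R - 1) *
  (poch 1 k * poch (-(1/4)) k * poch (-(3/4)) k
     / (poch (1/2) k ^+ 2 * poch (3/2) k)) *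
  (poch (1/2 + n%:R) k * poch (- n%:R) k
     / (poch (1/2 + 3 * n%:R) k * poch (-1 - 3 * n%:R) k)).

Lemma term_eq0 n k : (n < k)%N -> term n k = 0.
Proof.
by move=> lt_nk; rewrite /term (eqP (_ : poch (- n%:R) k == 0)) ?poch_Nnat_eq0 // !(mulr0, mul0r).
Qed.

Definition term_nratio (x y : rat) : rat :=
  (x + 1/2) / (x + 1/2 + y) * ((y - x - 1) / (- x - 1)) *
  ((3*x + 1/2 + y) * (3*x + 3/2 + y) * (3*x + 5/2 + y)
     / ((3*x + 1/2) * (3*x + 3/2) * (3*x + 5/2))) *
  ((-3*x - 4) * (-3*x - 3) * (-3*x - 2)
     / ((y - 3*x - 4) * (y - 3*x - 3) * (y - 3*x - 2))).

Definition term_kratio (x y : rat) : rat :=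
  (8*y + 7) / (8*y - 1) * (1 + y) * (y - 1/4) * (y - 3/4) / ((1/2 + y)^+2 * (3/2 + y))
  * (1/2 + x + y) * (y - x) / ((1/2 + 3*x + y) * (y - 1 - 3*x)).

Lemma term_shiftn n k : (k <= n.+1)%N -> term n k = term n.+1 k * term_nratio n%:R k%:R.
Proof.
move=> le_kn1.
have n_ge0 : (0 : rat) <= n%:R by rewrite ler0n.
have le_k : (k%:R : rat) <= n%:R + 1 by rewrite natr1 ler_nat.
have k_ge0 : (0 : rat) <= k%:R by rewrite ler0n.
have den_n := @poch_N3n1_neq0 n k ltac:(lia).
have den_n1 := @poch_N3n1_neq0 n.+1 k ltac:(lia).
have half_gt0 : 0 < poch (1/2) k by apply: poch_gt0; lra.
have three_halves_gt0 : 0 < poch (3/2) k by apply: poch_gt0; lra.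
have den_gt0 : 0 < poch (1/2 + 3 * n%:R) k by apply: poch_gt0; lra.
have den1_gt0 : 0 < poch (1/2 + 3 * n.+1%:R) k by apply: poch_gt0; rewrite -(natr1 n); lra.
have shift_half := poch_shift (1/2 + n%:R) (1/2 + n.+1%:R) k ltac:(rewrite -(natr1 n); ring).
have shift_neg := poch_shift (- n.+1%:R) (- n%:R) k ltac:(rewrite -(natr1 n); ring).
have shift_half3 := poch_shift3 (1/2 + 3 * n%:R) (1/2 + 3 * n.+1%:R) k ltac:(rewrite -(natr1 n); ring).
have shift_neg3 := poch_shift3 (-1 - 3 * n.+1%:R) (-1 - 3 * n%:R) k ltac:(rewrite -(natr1 n); ring).
rewrite /term (canRL (mulfK _) shift_half); last by rewrite -?(natr1 n); lra.
rewrite (canRL (mulKf _) (esym shift_neg)); last by rewrite -?(natr1 n); lra.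
rewrite (canRL (mulfK _) shift_half3); last by rewrite -?(natr1 n); neq0.
rewrite (canRL (mulKf _) (esym shift_neg3)); last by rewrite -?(natr1 n); neq0.
rewrite /term_nratio -(natr1 n) in den_n1 den1_gt0 *.
by field; neq0.
Qed.

Lemma term_shiftk n k : (k <= 3 * n)%N -> term n k.+1 = term n k * term_kratio n%:R k%:R.
Proof.
move=> le_k3n.
have n_ge0 : (0 : rat) <= n%:R by rewrite ler0n.
have le_k : (k%:R : rat) <= 3 * n%:R by rewrite -natrM ler_nat.
have k_ge0 : (0 : rat) <= k%:R by rewrite ler0n.
have den := @poch_N3n1_neq0 n k ltac:(lia).
have half_gt0 : 0 < poch (1/2) k by apply: poch_gt0; lra.
have three_halves_gt0 : 0 < poch (3/2) k by apply: poch_gt0; lra.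
have den_gt0 : 0 < poch (1/2 + 3 * n%:R) k by apply: poch_gt0; lra.
have eight_neq0 := natr8_sub1_neq0 k.
by rewrite /term /term_kratio !pochS -(natr1 k); field; neq0.
Qed.

Definition rho (x : rat) : rat :=
  (x + 1)^+2 * (x + 1/6) * (x + 5/6) / ((x + 1/2)^+2 * (x + 2/3) * (x + 4/3)).

Definition certR (x y : rat) : rat :=
  -4 * (4*x + 3) / (2*x + 1)^+2 * (y * (4*y^+2 - 1) * (2*y + 6*x + 5) * (y - 1/2)) /
  ((8*y - 1) * (2*y + 2*x + 1) * (y - 3*x - 3) * (y - 3*x - 4)).

Definition wzG (n k : nat) : rat := certR n%:R k%:R * term n.+1 k.

Lemma term_telescope n k : (k <= n.+1)%N ->
  term n.+1 k - rho n%:R * term n k = wzG n k.+1 - wzG n k.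
Proof.
move=> le_kn1.
have n_ge0 : (0 : rat) <= n%:R by rewrite ler0n.
have le_k : (k%:R : rat) <= n%:R + 1 by rewrite natr1 ler_nat.
have k_ge0 : (0 : rat) <= k%:R by rewrite ler0n.
have eight_neq0 := natr8_sub1_neq0 k.
rewrite /wzG (@term_shiftn n k le_kn1) (@term_shiftk n.+1 k ltac:(lia)).
move: (term n.+1 k) => t.
rewrite /rho /certR /term_nratio /term_kratio -(natr1 n) -(natr1 k).
by field; neq0.
Qed.

Definition harm (i : nat) : rat := 1 / ((2 * i%:R - 1) ^+ 2) - 9 / (4 * i%:R ^+ 2).

Definition alt_gap (x : rat) : rat := 1 / (2*x + 1)^+2 - 1 / (2*x + 2)^+2.

Definition sigma (x : rat) : rat := rho (x + 1) * (alt_gap (x + 1) / alt_gap x).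

Definition certQ (x y : rat) : rat :=
  - (4*x + 7) * (4*x + 5) * (y - 1) * (2*y - 1)^+3 * (2*y + 1) * (4*y - 3)
    * (2*y + 6*x + 9) * (2*y + 6*x + 11) / (2*x + 3)^+4 /
  (y * (8*y - 1) * (2*y + 2*x + 1) * (2*y + 2*x + 3)
     * (y - 3*x - 4) * (y - 3*x - 5) * (y - 3*x - 6) * (y - 3*x - 7)).

Definition wzW (n k : nat) : rat := certQ n%:R k%:R * term n.+2 k.

Lemma harm_telescope n k : (0 < k <= n.+2)%N ->
  wzG n.+1 k * harm k - sigma n%:R * (wzG n k * harm k) = wzW n k.+1 - wzW n k.
Proof.
move=> /andP[k_gt0 le_kn2].
have n_ge0 : (0 : rat) <= n%:R by rewrite ler0n.
have le_k : (k%:R : rat) <= n%:R + 2 by rewrite -(natrD _ n 2) ler_nat addn2.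
have k_ge1 : (1 : rat) <= k%:R by rewrite ler1n.
have eight_neq0 := natr8_sub1_neq0 k.
rewrite /wzG /wzW (@term_shiftn n.+1 k le_kn2) (@term_shiftk n.+2 k ltac:(lia)).
move: (term n.+2 k) => t.
rewrite /harm /sigma /alt_gap /rho /certR /certQ /term_nratio /term_kratio.
rewrite -(natr1 n.+1) -(natr1 n) -(natr1 k).
by field; neq0.
Qed.

Definition harmsum (k : nat) : rat := \sum_(1 <= i < k.+1) harm i.

Definition lhs (n : nat) : rat := \sum_(1 <= k < n.+1) term n k * harmsum k.

Definition wzY (n : nat) : rat := \sum_(1 <= k < n.+2) wzG n k * harm k.

Lemma lhs_rec n : lhs n.+1 - rho n%:R * lhs n = - wzY n.
Proof.
have -> : lhs n = \sum_(1 <= k < n.+2) term n k * harmsum k.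
  by rewrite /lhs [RHS]big_nat_recr //= term_eq0 // mul0r addr0.
rewrite /lhs mulr_sumr -sumrB.
rewrite (eq_big_nat _ _ (F2 := fun k => (wzG n k.+1 - wzG n k) * harmsum k)); last first.
  by move=> k /andP[_ lt_kn2]; rewrite mulrA -mulrBl term_telescope.
by rewrite /harmsum sumr_by_parts /wzG term_eq0 // mulr0 mul0r sub0r.
Qed.

Lemma wzY_rec n : wzY n.+1 = sigma n%:R * wzY n.
Proof.
apply/eqP; rewrite -subr_eq0.
have -> : wzY n = \sum_(1 <= k < n.+3) wzG n k * harm k.
  by rewrite /wzY [RHS]big_nat_recr //= /wzG term_eq0 // mulr0 mul0r addr0.
rewrite /wzY mulr_sumr -sumrB.
rewrite (eq_big_nat _ _ (F2 := fun k => wzW n k.+1 - wzW n k)); last first.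
  by move=> k lt_k; apply: harm_telescope; lia.
have W1 : wzW n 1 = 0 by rewrite /wzW /certQ subrr !(mulr0, mul0r).
by rewrite telescope_sumr // W1 /wzW term_eq0 // mulr0 subrr.
Qed.

Definition rhs_factor (n : nat) : rat :=
  (n`!)%:R ^+ 2 * poch (1/6) n * poch (5/6) n
    / (poch (1/2) n ^+ 2 * poch (2/3) n * poch (4/3) n).

Lemma rhs_factor_rec n : rhs_factor n.+1 = rho n%:R * rhs_factor n.
Proof.
have n_ge0 : (0 : rat) <= n%:R by rewrite ler0n.
have half_gt0 : 0 < poch (1/2) n by apply: poch_gt0; lra.
have two_thirds_gt0 : 0 < poch (2/3) n by apply: poch_gt0; lra.
have four_thirds_gt0 : 0 < poch (4/3) n by apply: poch_gt0; lra.
rewrite /rhs_factor /rho factS natrM !pochS -(natr1 n).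
by field; neq0.
Qed.

Lemma alt_gap_gt0 x : 0 <= x -> 0 < alt_gap x.
Proof.
move=> x_ge0.
have -> : alt_gap x = (4*x + 3) / ((2*x + 1)^+2 * (2*x + 2)^+2).
  by rewrite /alt_gap; field; neq0.
by rewrite divr_gt0 ?mulr_gt0 ?exprn_gt0 //; lra.
Qed.

Lemma wzY_closed n : wzY n = rhs_factor n.+1 * alt_gap n%:R.
Proof.
elim: n => [|n IHn].
  rewrite /wzY big_nat1 /wzG /certR /harm /term /rhs_factor /alt_gap /poch.
  by rewrite !big_ord_recr !big_ord0.
have gap_gt0 : 0 < alt_gap n%:R by apply: alt_gap_gt0; rewrite ler0n.
rewrite wzY_rec IHn (rhs_factor_rec n.+1) /sigma -(natr1 n).
by field; neq0.
Qed.

Definition alt_sum (N : nat) : rat := \sum_(1 <= j < N.+1) ((-1) ^+ j / (j%:R ^+ 2)).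

Lemma alt_sum_double_succ n : alt_sum (2 * n.+1) = alt_sum (2 * n) - alt_gap n%:R.
Proof.
have sign_odd : (-1) ^+ (2 * n).+1 = -1 :> rat.
  by rewrite exprS exprM sqrrN !expr1n mulr1.
have sign_even : (-1) ^+ (2 * n).+2 = 1 :> rat.
  by rewrite !exprS exprM sqrrN !expr1n mulr1 mulrNN mulr1.
have cast_odd : (2 * n).+1%:R = 2 * n%:R + 1 :> rat by rewrite -natr1 natrM.
have cast_even : (2 * n).+2%:R = 2 * n%:R + 2 :> rat by rewrite -addn2 natrD natrM.
have -> : (2 * n.+1 = (2 * n).+2)%N by lia.
rewrite /alt_sum big_nat_recr // big_nat_recr //=.
by rewrite sign_odd sign_even cast_odd cast_even /alt_gap; ring.
Qed.

Lemma lhs_closed n : lhs n = rhs_factor n * alt_sum (2 * n).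
Proof.
elim: n => [|n IHn]; first by rewrite /lhs /alt_sum !big_geq // mulr0.
rewrite -[lhs n.+1](subrK (rho n%:R * lhs n)) lhs_rec IHn wzY_closed.
by rewrite rhs_factor_rec alt_sum_double_succ; ring.
Qed.

Theorem mainTheorem9 (n : nat) (hn : (0 < n)%N) :
  \sum_(1 <= k < n.+1)
    ((8 * k%:R - 1) *
     (poch 1 k * poch (-(1/4)) k * poch (-(3/4)) k
        / (poch (1/2) k ^+ 2 * poch (3/2) k)) *
     (poch (1/2 + n%:R) k * poch (- n%:R) k
        / (poch (1/2 + 3 * n%:R) k * poch (-1 - 3 * n%:R) k)) *
     \sum_(1 <= i < k.+1) (1 / ((2 * i%:R - 1) ^+ 2) - 9 / (4 * i%:R ^+ 2)))
  = ((n`!)%:R ^+ 2 * poch (1/6) n * poch (5/6) n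
       / (poch (1/2) n ^+ 2 * poch (2/3) n * poch (4/3) n)) *
    \sum_(1 <= j < (2 * n).+1) ((-1) ^+ j / (j%:R ^+ 2)) :> rat.
Proof. exact: lhs_closed. Qed.
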